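(* Let $f$ be a real-valued function on pairs $(\rho,\sigma)$ with $\sigma\in\mathcal F$ and $\rho$ a density matrix on the same Hilbert space as $\sigma$, which is locally monotonic with respect to $\mathcal C_{\mathcal F}$. Then $f(\rho,\sigma)\ge f(C[\rho],C[\sigma])$ for every $C\in\mathcal C_{\mathcal F}$ (with $\sigma\in\mathcal F$ in its domain), and the same holds for $f'(\rho,\sigma):=f(\rho,\sigma)-f(\sigma,\sigma)$. Moreover, $f(\sigma,\sigma)$ is independent of $\sigma\in\mathcal F$.
   Context: $\mathcal F$ is the set of all full-rank density matrices on finite-dimensional Hilbert spaces, and $\mathcal C_{\mathcal F}$ is the set of quantum channels (between possibly different finite-dimensional Hilbert spaces) mapping full-rank states to full-rank states. $f$ is locally monotonic with respect to $\mathcal C_{\mathcal F}$ if whenever $C\in\mathcal C_{\mathcal F}$ acts on $\mathcal H_1\otimes\mathcal H_2$ with output space $\mathcal H'_1\otimes\mathcal H'_2$, $\sigma_1\otimes\sigma_2\in\mathcal F$ and $C[\sigma_1\otimes\sigma_2]=\sigma'_1\otimes\sigma'_2\in\mathcal F$, then for all density matrices $\rho_i$ on $\mathcal H_i$: $f(\rho_1,\sigma_1)+f(\rho_2,\sigma_2)\ge f(\rho'_1,\sigma'_1)+f(\rho'_2,\sigma'_2)$, with $\rho'_1=\mathrm{Tr}_2[C(\rho_1\otimes\rho_2)]$, $\rho'_2=\mathrm{Tr}_1[C(\rho_1\otimes\rho_2)]$. *)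

From HB Require Import structures.
From mathcomp Require Import all_boot all_order all_algebra.
From mathcomp Require Import complex mxtens.
From mathcomp Require Import reals.
Set Implicit Arguments. Unset Strict Implicit. Unset Printing Implicit Defensive.
Import Order.TTheory GRing.Theory Num.Theory.
Local Open Scope ring_scope.
Local Open Scope complex_scope.

Section Quantum.
Variable R : realType.
Local Notation C := (R[i]).

Definition adj {m n} (A : 'M[C]_(m, n)) : 'M[C]_(n, m) := (map_mx conjc A)^T.

Definition hermitian {n} (A : 'M[C]_n) : Prop := adj A = A.

Definition psd {n} (A : 'M[C]_n) : Prop :=
  hermitian A /\ forall v : 'cV[C]_n, 0 <= (adj v *m A *m v) 0 0.

Definition pd {n} (A : 'M[C]_n) : Prop :=
  hermitian A /\ forall v : 'cV[C]_n, v != 0 -> 0 < (adj v *m A *m v) 0 0.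

(* density matrices (states) and full-rank states (the set F) *)
Definition density {n} (A : 'M[C]_n) : Prop := psd A /\ \tr A = 1.
Definition fullrank {n} (A : 'M[C]_n) : Prop := pd A /\ \tr A = 1.

Definition blk {k n} (X : 'M[C]_(k * n)) (i j : 'I_k) : 'M[C]_n :=
  \matrix_(a, b) X (mxtens_index (i, a)) (mxtens_index (j, b)).

(* id_k (x) Phi *)
Definition ampl {n m} (k : nat) (Phi : 'M[C]_n -> 'M[C]_m)
  (X : 'M[C]_(k * n)) : 'M[C]_(k * m) :=
  \sum_(i < k) \sum_(j < k) tensmx (delta_mx i j : 'M[C]_k) (Phi (blk X i j)).

Definition channel {n m} (Phi : 'M[C]_n -> 'M[C]_m) : Prop :=
  [/\ forall (a : C) (X Y : 'M[C]_n), Phi (a *: X + Y) = a *: Phi X + Phi Y,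
      forall (k : nat) (X : 'M[C]_(k * n)), psd X -> psd (@ampl n m k Phi X)
    & forall X : 'M[C]_n, \tr (Phi X) = \tr X].

Definition inCF {n m} (Phi : 'M[C]_n -> 'M[C]_m) : Prop :=
  channel Phi /\ forall s : 'M[C]_n, fullrank s -> fullrank (Phi s).

Definition ptr2 {n1 n2} (X : 'M[C]_(n1 * n2)) : 'M[C]_n1 :=
  \matrix_(a, b) \sum_(c < n2) X (mxtens_index (a, c)) (mxtens_index (b, c)).
Definition ptr1 {n1 n2} (X : 'M[C]_(n1 * n2)) : 'M[C]_n2 :=
  \matrix_(a, b) \sum_(c < n1) X (mxtens_index (c, a)) (mxtens_index (c, b)).

Definition locally_monotonic (f : forall n, 'M[C]_n -> 'M[C]_n -> R) : Prop :=
  forall (n1 n2 m1 m2 : nat) (Ch : 'M[C]_(n1 * n2) -> 'M[C]_(m1 * m2))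
    (s1 : 'M[C]_n1) (s2 : 'M[C]_n2) (s1' : 'M[C]_m1) (s2' : 'M[C]_m2),
    inCF Ch -> fullrank s1 -> fullrank s2 -> fullrank s1' -> fullrank s2' ->
    Ch (tensmx s1 s2) = tensmx s1' s2' ->
    forall (r1 : 'M[C]_n1) (r2 : 'M[C]_n2), density r1 -> density r2 ->
      f m1 (ptr2 (Ch (tensmx r1 r2))) s1' + f m2 (ptr1 (Ch (tensmx r1 r2))) s2'
      <= f n1 r1 s1 + f n2 r2 s2.

End Quantum.

(* Tensoring a channel with the identity on a one-dimensional system, whose
   only state is full rank, turns local monotonicity into monotonicity under
   every channel of C_F.  For full-rank sigma and tau the replacement channel
   X |-> tr(X) tau lies in C_F and maps sigma to tau, so monotonicity gives
   f(tau, tau) <= f(sigma, sigma), and equality by symmetry; the claim for f'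
   follows.  Complete positivity of the replacement channel amounts to the
   positivity of ptr2 X (x) tau, which is read off the spectral decomposition
   of tau. *)

From Pilot Require Import Defs.
From HB Require Import structures.
From mathcomp Require Import all_boot all_order all_algebra.
From mathcomp Require Import complex mxtens.
From mathcomp Require Import reals.
From mathcomp Require Import ring.
Import Order.TTheory GRing.Theory Num.Theory.
Set Implicit Arguments. Unset Strict Implicit. Unset Printing Implicit Defensive.
Local Open Scope ring_scope.
Local Open Scope complex_scope.

Section Quantum.
Variable R : realType.
Local Notation C := (R[i]).

Lemma conjC_conjc (x : C) : Num.conj x = conjc x.
Proof.
have [->|x0] := eqVneq x 0; first by rewrite rmorph0 conjc0.
by apply: (mulfI x0); rewrite -normCK sqr_normc.
Qed.

Lemma adjE m n (A : 'M[C]_(m, n)) i j : adj A i j = conjc (A j i).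
Proof. by rewrite !mxE. Qed.

Lemma adj_conjC m n (A : 'M[C]_(m, n)) : adj A = map_mx Num.conj A^T.
Proof. by apply/matrixP => i j; rewrite !mxE conjC_conjc. Qed.

Lemma adjK m n (A : 'M[C]_(m, n)) : adj (adj A) = A.
Proof. by apply/matrixP => i j; rewrite !adjE conjcK. Qed.

Lemma adjM m n p (A : 'M[C]_(m, n)) (B : 'M[C]_(n, p)) :
  adj (A *m B) = adj B *m adj A.
Proof. by rewrite /adj map_mxM trmx_mul. Qed.

Lemma adj1 n : adj (1%:M : 'M[C]_n) = 1%:M.
Proof. by rewrite /adj map_mx1 trmx1. Qed.

Lemma adj_tens m n p q (A : 'M[C]_(m, n)) (B : 'M[C]_(p, q)) :
  adj (A *t B) = adj A *t adj B.
Proof. by rewrite /adj map_mxT trmx_tens. Qed.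

Lemma hermitianE n (A : 'M[C]_n) : Defs.hermitian A -> forall i j, A i j = conjc (A j i).
Proof. by move=> hA i j; rewrite -{1}hA adjE. Qed.

Definition qform n (A : 'M[C]_n) (v : 'cV[C]_n) : C := (adj v *m A *m v) 0 0.

Lemma qformE n (A : 'M[C]_n) (v : 'cV[C]_n) :
  qform A v = \sum_a \sum_b conjc (v a 0) * A a b * v b 0.
Proof.
rewrite /qform mxE; under eq_bigr do rewrite mxE big_distrl /=.
rewrite exchange_big /=; apply: eq_bigr => a _; apply: eq_bigr => b _.
by rewrite adjE.
Qed.

Lemma qform_adj_mulmx n m (P : 'M[C]_(n, m)) (A : 'M[C]_n) (v : 'cV[C]_m) :
  qform (adj P *m A *m P) v = qform A (P *m v).
Proof. by rewrite /qform adjM !mulmxA. Qed.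

Lemma adj_delta m n (i : 'I_m) (j : 'I_n) : adj (delta_mx i j : 'M[C]_(m, n)) = delta_mx j i.
Proof. by apply/matrixP => a b; rewrite adjE !mxE conjc_nat andbC. Qed.

Lemma qform_delta n (A : 'M[C]_n) k : qform A (delta_mx k 0) = A k k.
Proof. by rewrite /qform adj_delta -rowE -colE !mxE. Qed.

Lemma psd_diag_ge0 n (A : 'M[C]_n) k : psd A -> 0 <= A k k.
Proof. by case=> _ /(_ (delta_mx k 0)); rewrite -/(qform _ _) qform_delta. Qed.

Lemma psd_adj_mulmx n m (P : 'M[C]_(n, m)) (A : 'M[C]_n) :
  psd A -> psd (adj P *m A *m P).
Proof.
case=> hA pA; split=> [|v]; last by rewrite -/(qform _ _) qform_adj_mulmx; apply: pA.
by rewrite /Defs.hermitian !adjM adjK hA mulmxA.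
Qed.

Lemma hermitian_spectral n (T : 'M[C]_n) : Defs.hermitian T ->
  exists (P : 'M[C]_n) (d : 'rV[C]_n),
    P *m adj P = 1%:M /\ T = adj P *m diag_mx d *m P.
Proof.
move=> hT; have nT : T \is normalmx.
  by apply/normalmxP; rewrite -adj_conjC hT.
have uP := spectral_unitarymx T.
exists (spectralmx T), (spectral_diag T); split.
  by rewrite adj_conjC; apply/unitarymxP.
by rewrite adj_conjC -invmx_unitary //; apply/orthomx_spectralP.
Qed.

Lemma psd_spectral n (T : 'M[C]_n) : psd T ->
  exists (P : 'M[C]_n) (d : 'rV[C]_n),
    (forall l, 0 <= d 0 l) /\ T = adj P *m diag_mx d *m P.
Proof.
move=> psdT; have [P [d [PP eT]]] := hermitian_spectral psdT.1.
exists P, d; split=> // l.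
have eD : adj (adj P) *m T *m adj P = diag_mx d.
  by rewrite adjK eT !mulmxA PP mul1mx -mulmxA PP mulmx1.
by have := psd_diag_ge0 l (psd_adj_mulmx (adj P) psdT); rewrite eD mxE eqxx mulr1n.
Qed.

Lemma sum_mxtens_index p q (F : 'I_(p * q) -> C) :
  \sum_x F x = \sum_(i < p) \sum_(a < q) F (mxtens_index (i, a)).
Proof.
rewrite pair_big /= (reindex (@mxtens_index p q)) /=; last first.
  by exists (@mxtens_unindex p q) => x _; rewrite ?mxtens_indexK ?mxtens_unindexK.
by apply: eq_bigr => -[i a].
Qed.

Lemma qform_tensE p q (X : 'M[C]_(p * q)) (v : 'cV[C]_(p * q)) :
  qform X v = \sum_i \sum_a \sum_j \sum_b conjc (v (mxtens_index (i, a)) 0) *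
     X (mxtens_index (i, a)) (mxtens_index (j, b)) * v (mxtens_index (j, b)) 0.
Proof.
rewrite qformE sum_mxtens_index; apply: eq_bigr => i _; apply: eq_bigr => a _.
by rewrite sum_mxtens_index.
Qed.

Lemma psd_tens_diag k m (Y : 'M[C]_k) (d : 'rV[C]_m) :
  psd Y -> (forall l, 0 <= d 0 l) -> psd (Y *t diag_mx d).
Proof.
move=> [hY pY] d_ge0; split.
  rewrite /Defs.hermitian adj_tens hY; congr (_ *t _); apply/matrixP => a b.
  rewrite adjE !mxE eq_sym; case: eqP => [->|_]; last by rewrite conjc0.
  by rewrite !mulr1n -conjC_conjc conj_Creal ?ger0_real.
move=> v; rewrite -/(qform _ _).
pose w (l : 'I_m) : 'cV[C]_k := \col_i v (mxtens_index (i, l)) 0.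
suff -> : qform (Y *t diag_mx d) v = \sum_l d 0 l * qform Y (w l).
  by apply: sumr_ge0 => l _; apply: mulr_ge0; [exact: d_ge0 | exact: pY].
rewrite qform_tensE exchange_big /=; apply: eq_bigr => a _.
rewrite qformE mulr_sumr; apply: eq_bigr => i _; rewrite mulr_sumr; apply: eq_bigr => j _.
rewrite (big_only1 a) // => [|b nab _]; last first.
  by rewrite tensmxE mxE eq_sym (negbTE nab) mulr0 mulr0 mul0r.
rewrite tensmxE !mxE eqxx mulr1n; ring.
Qed.

Lemma psd_tens k m (Y : 'M[C]_k) (T : 'M[C]_m) : psd Y -> psd T -> psd (Y *t T).
Proof.
move=> psdY /psd_spectral [P [d [d_ge0 ->]]].
have -> : Y *t (adj P *m diag_mx d *m P) =
          adj (1%:M *t P) *m (Y *t diag_mx d) *m (1%:M *t P).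
  by rewrite adj_tens adj1 !tensmx_mul mul1mx mulmx1.
exact/psd_adj_mulmx/psd_tens_diag.
Qed.

Lemma psd_ptr2 k n (X : 'M[C]_(k * n)) : psd X -> psd (ptr2 X).
Proof.
case=> hX pX; split.
  apply/matrixP => a b; rewrite adjE !mxE rmorph_sum; apply: eq_bigr => c _.
  by rewrite [in RHS](hermitianE hX).
move=> u; rewrite -/(qform _ _).
pose w (c : 'I_n) : 'cV[C]_(k * n) :=
  \col_x (u (mxtens_unindex x).1 0 * ((mxtens_unindex x).2 == c)%:R).
have qform_w c : qform X (w c) =
    \sum_i \sum_j conjc (u i 0) * X (mxtens_index (i, c)) (mxtens_index (j, c)) * u j 0.
  rewrite qform_tensE; apply: eq_bigr => i _.
  rewrite (big_only1 c) // => [|a nac _]; last first.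
    rewrite big1 // => j _; rewrite big1 // => b _.
    by rewrite mxE mxtens_indexK /= (negbTE nac) mulr0 conjc0 !mul0r.
  apply: eq_bigr => j _; rewrite (big_only1 c) // => [|b nbc _]; last first.
    by rewrite [w c (mxtens_index (j, b)) 0]mxE mxtens_indexK /= (negbTE nbc) !mulr0.
  by rewrite !mxE !mxtens_indexK /= eqxx !mulr1.
suff -> : qform (ptr2 X) u = \sum_c qform X (w c) by apply: sumr_ge0 => c _; apply: pX.
under [RHS]eq_bigr => c _ do rewrite qform_w.
rewrite qformE [RHS]exchange_big /=; apply: eq_bigr => i _.
rewrite [RHS]exchange_big /=; apply: eq_bigr => j _.
by rewrite mxE mulr_sumr mulr_suml.
Qed.

Lemma ptr2_tens n1 n2 (A : 'M[C]_n1) (B : 'M[C]_n2) : ptr2 (A *t B) = \tr B *: A.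
Proof.
apply/matrixP => a b; rewrite !mxE /mxtrace big_distrl /=.
by apply: eq_bigr => c _; rewrite tensmxE mulrC.
Qed.

Lemma ptr1_tens n1 n2 (A : 'M[C]_n1) (B : 'M[C]_n2) : ptr1 (A *t B) = \tr A *: B.
Proof.
apply/matrixP => a b; rewrite !mxE /mxtrace big_distrl /=.
by apply: eq_bigr => c _; rewrite tensmxE.
Qed.

Lemma fullrank_density n (A : 'M[C]_n) : fullrank A -> density A.
Proof.
case=> -[hA pA] tA; split=> //; split=> // v.
have [->|v0] := eqVneq v 0; last exact/ltW/pA.
by rewrite mulmx0 mxE.
Qed.

Lemma fullrank1 : fullrank (1%:M : 'M[C]_1).
Proof.
split; last by rewrite mxtrace1.
split=> [|v v0]; first exact: adj1.
rewrite mulmx1 mxE big_ord1 adjE -conjC_conjc mulrC mul_conjC_gt0.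
by apply: contra v0 => /eqP v00; apply/eqP/matrixP => i j; rewrite !ord1 v00 mxE.
Qed.

Definition replace_channel n m (T : 'M[C]_m) (X : 'M[C]_n) : 'M[C]_m := \tr X *: T.

Lemma ampl_replace_channel k n m (T : 'M[C]_m) (X : 'M[C]_(k * n)) :
  ampl (@replace_channel n m T) X = ptr2 X *t T.
Proof.
apply/matrixP => x y; case: (mxtens_indexP x) => a c; case: (mxtens_indexP y) => b e.
rewrite tensmxE /ampl summxE (big_only1 a) // => [|i nia _]; last first.
  by rewrite summxE big1 // => j _; rewrite tensmxE mxE eq_sym (negbTE nia) mul0r.
rewrite summxE (big_only1 b) // => [|j njb _]; last first.
  by rewrite tensmxE mxE eqxx eq_sym (negbTE njb) mul0r.
rewrite tensmxE !mxE !eqxx mul1r /mxtrace; congr (_ * _).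
by apply: eq_bigr => l _; rewrite mxE.
Qed.

Lemma inCF_replace_channel n m (T : 'M[C]_m) :
  fullrank T -> inCF (@replace_channel n m T).
Proof.
move=> frT; split=> [|s frs]; last by rewrite /replace_channel frs.2 scale1r.
split=> [a X Y|k X psdX|X]; rewrite /replace_channel.
- by rewrite mxtraceD mxtraceZ scalerDl scalerA.
- rewrite ampl_replace_channel; apply: psd_tens; first exact: psd_ptr2.
  by case: (fullrank_density frT).
- by rewrite mxtraceZ frT.2 mulr1.
Qed.

Lemma inCF_castmx n n' m m' (en : n' = n) (em : m = m') (Ch : 'M[C]_n -> 'M[C]_m) :
  inCF Ch -> inCF (fun X : 'M[C]_n' => castmx (em, em) (Ch (castmx (en, en) X))).
Proof. by case: n / en in Ch *; case: m' / em. Qed.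

Section LocallyMonotonic.
Variable f : forall n, 'M[C]_n -> 'M[C]_n -> R.
Hypothesis f_lm : locally_monotonic f.

Lemma locally_monotonic_monotone n m (Ch : 'M[C]_n -> 'M[C]_m) (rho sigma : 'M[C]_n) :
  inCF Ch -> density rho -> fullrank sigma -> f (Ch rho) (Ch sigma) <= f rho sigma.
Proof.
move=> CF_Ch st_rho fr_sigma.
have fr_Ch_sigma : fullrank (Ch sigma) by case: CF_Ch => _; apply.
pose Ch1 X := castmx (esym (muln1 m), esym (muln1 m)) (Ch (castmx (muln1 n, muln1 n) X)).
have CF_Ch1 : inCF Ch1 by apply: inCF_castmx.
have Ch1_tens X : Ch1 (X *t 1%:M) = Ch X *t 1%:M.
  by rewrite /Ch1 !tens_mx_scalar !scale1r castmxKV.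
have := f_lm CF_Ch1 fr_sigma fullrank1 fr_Ch_sigma fullrank1 (Ch1_tens sigma) st_rho
  (fullrank_density fullrank1).
have [[_ _ trCh] _] := CF_Ch.
by rewrite Ch1_tens ptr2_tens ptr1_tens !mxtrace1 scale1r scalemx1 trCh st_rho.2 lerD2r.
Qed.

Lemma locally_monotonic_diag_const n m (sigma : 'M[C]_n) (tau : 'M[C]_m) :
  fullrank sigma -> fullrank tau -> f sigma sigma = f tau tau.
Proof.
have le_diag n' m' (s : 'M[C]_n') (t : 'M[C]_m') :
    fullrank s -> fullrank t -> f s s <= f t t.
  move=> fr_s fr_t.
  have := locally_monotonic_monotone (inCF_replace_channel m' fr_s) (fullrank_density fr_t) fr_t.
  by rewrite /replace_channel fr_t.2 scale1r.
by move=> fr_sigma fr_tau; apply/eqP; rewrite eq_le !le_diag.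
Qed.

End LocallyMonotonic.
End Quantum.

Unset Implicit Arguments.

Theorem lemma39 (R : realType) (f : forall n : nat, 'M[R[i]]_n -> 'M[R[i]]_n -> R) :
  locally_monotonic f ->
  [/\ (forall (n m : nat) (Ch : 'M[R[i]]_n -> 'M[R[i]]_m)
         (rho sigma : 'M[R[i]]_n),
         inCF Ch -> density rho -> fullrank sigma ->
         f m (Ch rho) (Ch sigma) <= f n rho sigma),
      (forall (n m : nat) (Ch : 'M[R[i]]_n -> 'M[R[i]]_m)
         (rho sigma : 'M[R[i]]_n),
         inCF Ch -> density rho -> fullrank sigma ->
         f m (Ch rho) (Ch sigma) - f m (Ch sigma) (Ch sigma)
         <= f n rho sigma - f n sigma sigma)
    & (forall (n m : nat) (sigma : 'M[R[i]]_n) (tau : 'M[R[i]]_m),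
         fullrank sigma -> fullrank tau -> f n sigma sigma = f m tau tau)].
Proof.
move=> f_lm; have mono := locally_monotonic_monotone f_lm.
have diag := locally_monotonic_diag_const f_lm.
split=> [||n m sigma tau]; [exact: mono | | exact: diag].
move=> n m Ch rho sigma CF_Ch st_rho fr_sigma.
have fr_Ch_sigma : fullrank (Ch sigma) by case: CF_Ch => _; apply.
by rewrite (diag _ _ _ _ fr_Ch_sigma fr_sigma) lerD2r; apply: mono.
Qed.
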